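(* Let $r \ge 1$ and let $O, A, B, C \subseteq \mathbb{R}^r$ be axis-aligned bounding boxes. If $(A < B \mid O)$ and $(B < C \mid O)$, then $(A < C \mid O)$.
   Context: An axis-aligned bounding box (AABB) in $\mathbb{R}^r$ is a set $M = \prod_{d=1}^r [\check{M}_d, \hat{M}_d]$ with real numbers $\check{M}_d \le \hat{M}_d$ for each $d$ (in particular it is nonempty). $\mathrm{dist}$ is the Euclidean distance. For AABBs $O, E, B$, the relation $(E < B \mid O)$ means $\forall o \in O : \forall e \in E : \forall b \in B : \mathrm{dist}(o, e) < \mathrm{dist}(o, b)$. *)

From mathcomp Require Import all_boot all_order all_algebra.
From mathcomp Require Import Rstruct.
From Stdlib Require Import Reals.
Set Implicit Arguments. Unset Strict Implicit. Unset Printing Implicit Defensive.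
Import Order.TTheory GRing.Theory Num.Theory.
Local Open Scope ring_scope.

Definition dist (r : nat) (x y : 'rV[R]_r) : R :=
  Num.sqrt (\sum_(d < r) (x 0 d - y 0 d) ^+ 2).

Record aabb (r : nat) := AABB {
  lo : 'rV[R]_r;
  hi : 'rV[R]_r;
  lo_le_hi : forall d : 'I_r, lo 0 d <= hi 0 d }.

Definition in_box (r : nat) (M : aabb r) (x : 'rV[R]_r) : Prop :=
  forall d : 'I_r, lo M 0 d <= x 0 d /\ x 0 d <= hi M 0 d.

Definition closer (r : nat) (E B O : aabb r) : Prop :=
  forall o e b, in_box O o -> in_box E e -> in_box B b ->
    dist o e < dist o b.

From mathcomp Require Import all_boot all_order all_algebra.
From mathcomp Require Import Rstruct.
From Stdlib Require Import Reals.
Set Implicit Arguments. Unset Strict Implicit. Unset Printing Implicit Defensive.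
Import Order.TTheory GRing.Theory Num.Theory.

Lemma in_box_lo (r : nat) (M : aabb r) : in_box M (lo M).
Proof. by move=> d; split; [exact: lexx | exact: lo_le_hi]. Qed.

Lemma closer_trans (r : nat) (O A B C : aabb r) :
  closer A B O -> closer B C O -> closer A C O.
Proof.
move=> AB BC o a c Oo Aa Cc.
exact: (lt_trans (AB o a (lo B) Oo Aa (in_box_lo B)) (BC o (lo B) c Oo (in_box_lo B) Cc)).
Qed.

Theorem lemma4p6 (r : nat) (hr : (1 <= r)%N) (O A B C : aabb r) :
  closer A B O -> closer B C O -> closer A C O.
Proof. exact: closer_trans. Qed.
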